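(* Let $\mathcal M$ be the quiver whose vertices are all finite metric spaces and whose edges from $X$ to $Y$ are all maps $X\to Y$ that are either isometries (metric-preserving bijections) or drifts. Then: (i) two finite metric spaces are isotypic in $\mathcal M$ if and only if they are isometric; (ii) a finite metric space is a primitive vertex of $\mathcal M$ if and only if it is trim; (iii) $\mathcal M$ is a phylogenetic quiver; (iv) every vertex of $\mathcal M$ is regular.
   Context: A quiver consists of a class of vertices and, for each ordered pair of vertices $(A,B)$, a set of edges $A\to B$ (loops and multiple edges allowed). An evolution of length $m\ge 0$ is a sequence $A_0\leftarrow A_1\leftarrow\cdots\leftarrow A_m$ of vertices together with edges $A_k\to A_{k-1}$ ($1\le k\le m$); $A_0$ is its initial and $A_m$ its terminal vertex. Write $A\le B$ ($A$ is an ancestor of $B$, $B$ a descendant of $A$) if there is an evolution with initial vertex $A$ and terminal vertex $B$; $A,B$ are isotypic ($A\sim B$) if $A\le B$ and $B\le A$. A vertex $A$ is primitive if every ancestor of $A$ is isotypic to $A$. A full evolution for $X$ is an evolution with primitive initial vertex and terminal vertex $X$. The height $h(X)$ is the smallest length of a full evolution for $X$ ($h(X)=\infty$ if none exists). An evolution $\alpha=(A_0\leftarrow\cdots\leftarrow A_m)$ embeds in $\beta=(B_0\leftarrow\cdots\leftarrow B_n)$ if $m\le n$ and there are integers $0\le r_0<r_1<\cdots<r_m\le n$ with $A_k\sim B_{r_k}$ for all $k$. A universal evolution for $X$ is a full evolution for $X$ that embeds in every full evolution for $X$; $X$ is phylogenetic if it has a universal evolution. A quiver is monotonous if $h(A)\ge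 h(B)$ for every edge $A\to B$; it is small if the isotypy classes of its vertices form a set; it is phylogenetic if it is small, monotonous, and all its vertices are phylogenetic. The clade $\mathcal O_A$ of a vertex $A$ is the quiver formed by all descendants of $A$ and all edges between them. A vertex $A$ is regular if for every $B$ in $\mathcal O_A$ with $h(B)=h(A)$ there is an edge $B\to A$. Metric spaces have non-empty underlying sets. For a metric space $(X,d)$ define $\underline d:X\to\mathbb R_+$ by: $\underline d=0$ if $X$ has one point; $\underline d(x)=\underline d(y)=d(x,y)/2$ if $X=\{x,y\}$ has two points; and if $X$ has at least three points, $\underline d(x)=\inf_{y,z\in X\setminus\{x\},\,y\neq z}\frac{d(x,y)+d(x,z)-d(y,z)}{2}$. A metric space is trim if $\underline d\equiv 0$ (equivalently, it has one point or every $x$ lies between two distinct other points $y,z$, i.e. $d(x,y)+d(x,z)=d(y,z)$). A map $f:(X,d)\to(Y,\rho)$ is a drift if $f(X)=Y$ and $\rho(f(x),f(y))=d(x,y)-\underline d(x)-\underline d(y)$ for all distinct $x,y\in X$. *)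

From Stdlib Require Import Reals List.
Open Scope R_scope.

Section Quiver.
Variable V : Type.
Variable E : V -> V -> Type.

(* An evolution A_0 <- A_1 <- ... <- A_m: length m, vertices vx 0..vx m
   (values of vx beyond m are irrelevant), and edges A_{k+1} -> A_k. *)
Record evolution := {
  ev_len : nat;
  ev_vx : nat -> V;
  ev_edge : forall k : nat, (k < ev_len)%nat -> E (ev_vx (S k)) (ev_vx k)
}.

Definition initial (a : evolution) : V := ev_vx a 0.
Definition terminal (a : evolution) : V := ev_vx a (ev_len a).

Definition ancestor (A B : V) : Prop :=
  exists a : evolution, initial a = A /\ terminal a = B.

Definition isotypic (A B : V) : Prop := ancestor A B /\ ancestor B A.

Definition primitive_vertex (A : V) : Prop :=
  forall B, ancestor B A -> isotypic B A.

Definition full_evolution (a : evolution) (X : V) : Prop :=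
  primitive_vertex (initial a) /\ terminal a = X.

(* height: Some n = finite height n, None = infinity *)
Definition has_height (X : V) (o : option nat) : Prop :=
  match o with
  | None => ~ exists a, full_evolution a X
  | Some n => (exists a, full_evolution a X /\ ev_len a = n) /\
              (forall a, full_evolution a X -> (n <= ev_len a)%nat)
  end.

Definition ole (o1 o2 : option nat) : Prop :=
  match o1, o2 with
  | _, None => True
  | None, Some _ => False
  | Some m, Some n => (m <= n)%nat
  end.

Definition embeds (a b : evolution) : Prop :=
  (ev_len a <= ev_len b)%nat /\
  exists r : nat -> nat,
    (forall k, (k < ev_len a)%nat -> (r k < r (S k))%nat) /\
    (r (ev_len a) <= ev_len b)%nat /\
    (forall k, (k <= ev_len a)%nat -> isotypic (ev_vx a k) (ev_vx b (r k))).

Definition universal_evolution (a : evolution) (X : V) : Prop :=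
  full_evolution a X /\ forall b, full_evolution b X -> embeds a b.

Definition phylogenetic_vertex (X : V) : Prop :=
  exists a, universal_evolution a X.

Definition monotonous : Prop :=
  forall (A B : V) (e : E A B) (oA oB : option nat),
    has_height A oA -> has_height B oB -> ole oB oA.

(* small: the isotypy classes form a set, i.e. are indexed by a type in Set *)
Definition small : Prop :=
  exists (I : Set) (f : I -> V), forall v : V, exists i : I, isotypic (f i) v.

Definition phylogenetic_quiver : Prop :=
  small /\ monotonous /\ forall X, phylogenetic_vertex X.

(* B is in the clade O_A iff A <= B; edges of the clade are all edges
   between its vertices. Heights are those of the ambient quiver. *)
Definition in_clade (A B : V) : Prop := ancestor A B.

Definition regular (A : V) : Prop :=
  forall B, in_clade A B ->
    (forall o, has_height A o -> has_height B o) ->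
    inhabited (E B A).

End Quiver.

Arguments initial {V E}.
Arguments terminal {V E}.
Arguments ancestor {V} E.
Arguments isotypic {V} E.
Arguments primitive_vertex {V} E.
Arguments phylogenetic_quiver {V} E.
Arguments regular {V} E.

Record FinMetric := {
  pt : Type;
  dist : pt -> pt -> R;
  pt_finite : exists l : list pt, forall x, In x l;
  pt_nonempty : inhabited pt;
  dist_zero : forall x y, dist x y = 0 <-> x = y;
  dist_sym : forall x y, dist x y = dist y x;
  dist_tri : forall x y z, dist x z <= dist x y + dist y z
}.

Definition ud_is (M : FinMetric) (x : pt M) (r : R) : Prop :=
  ((forall y : pt M, y = x) /\ r = 0)
  \/ (exists y : pt M, y <> x /\ (forall z, z = x \/ z = y) /\
        r = dist M x y / 2)
  \/ ((exists y z : pt M, y <> x /\ z <> x /\ y <> z) /\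
      (forall y z : pt M, y <> x -> z <> x -> y <> z ->
          r <= (dist M x y + dist M x z - dist M y z) / 2) /\
      (forall b : R, (forall y z : pt M, y <> x -> z <> x -> y <> z ->
          b <= (dist M x y + dist M x z - dist M y z) / 2) -> b <= r)).

Definition trim (M : FinMetric) : Prop := forall x : pt M, ud_is M x 0.

Definition bijective_map {A B : Type} (f : A -> B) : Prop :=
  (forall x y, f x = f y -> x = y) /\ (forall y, exists x, f x = y).

Definition is_isometry (X Y : FinMetric) (f : pt X -> pt Y) : Prop :=
  bijective_map f /\ forall x y, dist Y (f x) (f y) = dist X x y.

Definition isometric (X Y : FinMetric) : Prop :=
  exists f : pt X -> pt Y, is_isometry X Y f.

Definition is_drift (X Y : FinMetric) (f : pt X -> pt Y) : Prop :=
  (forall y, exists x, f x = y) /\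
  forall x y : pt X, x <> y ->
    exists rx ry, ud_is X x rx /\ ud_is X y ry /\
      dist Y (f x) (f y) = dist X x y - rx - ry.

Definition MEdge (X Y : FinMetric) : Type :=
  { f : pt X -> pt Y | is_isometry X Y f \/ is_drift X Y f }.

(* Put rho(x, y) = d(x, y) - ud(x) - ud(y) for x <> y.  This is a pseudometric, its metric
   quotient D X receives a drift from X, and every drift out of X lands in a copy of D X.
   Edges are surjective and 1-Lipschitz, and such a self-map of a finite metric space is
   an isometry; hence isotypy is isometry, and X is primitive iff X -> D X is an isometry,
   i.e. iff X is trim.  Drifting either identifies two points or yields a trim space, so
   iterating D reaches a trim space after h(X) steps.  An edge either preserves the space
   up to isometry or is a drift lowering h by one; therefore the descendants of X are, up
   to isometry, the iterates D^j X, the chain D^h(X) X <- ... <- D X <- X is a universal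
   evolution, and a descendant of X of height h(X) is isometric to X. *)

From Stdlib Require Import Reals List Lra Lia Classical ClassicalEpsilon ProofIrrelevance
  Permutation FunctionalExtensionality PropExtensionality.
Open Scope R_scope.

Definition classic_eq_dec {A : Type} (x y : A) : {x = y} + {x <> y} :=
  excluded_middle_informative (x = y).

Lemma proj1_sig_inj {A : Type} {P : A -> Prop} (u v : {x : A | P x}) :
  proj1_sig u = proj1_sig v -> u = v.
Proof. apply eq_sig_hprop. intros; apply proof_irrelevance. Qed.

Lemma dist_refl (X : FinMetric) (x : pt X) : dist X x x = 0.
Proof. now apply dist_zero. Qed.

Lemma dist_nonneg (X : FinMetric) (x y : pt X) : 0 <= dist X x y.
Proof.
  pose proof (dist_tri X x y x) as H. rewrite dist_refl, (dist_sym X y x) in H. lra.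
Qed.

Lemma enum_nodup (X : FinMetric) : exists l : list (pt X), NoDup l /\ forall x, In x l.
Proof.
  destruct (pt_finite X) as [l Hl]. exists (nodup classic_eq_dec l).
  split; [apply NoDup_nodup | intros x; apply nodup_In, Hl].
Qed.

(** * The function [ud] *)

Section Underline.
Variable X : FinMetric.

Definition gromov (x y z : pt X) : R := (dist X x y + dist X x z - dist X y z) / 2.

Lemma gromov_nonneg x y z : 0 <= gromov x y z.
Proof.
  unfold gromov. pose proof (dist_tri X y x z). rewrite (dist_sym X y x) in H. lra.
Qed.

Lemma ud_is_unique x r1 r2 : ud_is X x r1 -> ud_is X x r2 -> r1 = r2.
Proof.
  intros [[H1 ->]|[[y [Hy [H1 ->]]]|[[y [z [Hy [Hz Hyz]]]] [H1 H1']]]]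
         [[H2 ->]|[[y' [Hy' [H2 ->]]]|[[y' [z' [Hy' [Hz' Hyz']]]] [H2 H2']]]].
  all: try reflexivity.
  all: try (exfalso; solve [apply Hy; apply H1 | apply Hy; apply H2
                           | apply Hy'; apply H1 | apply Hy'; apply H2]).
  - destruct (H1 y') as [?|?]; [congruence | now subst].
  - exfalso. destruct (H1 y') as [?|?]; destruct (H1 z') as [?|?]; congruence.
  - exfalso. destruct (H2 y) as [?|?]; destruct (H2 z) as [?|?]; congruence.
  - apply Rle_antisym; [apply H2'; exact H1 | apply H1'; exact H2].
Qed.

Lemma ud_is_exists x : exists r, ud_is X x r.
Proof.
  destruct (classic (forall y, y = x)) as [H|H]; [exists 0; left; auto|].
  apply not_all_ex_not in H as [y Hy].
  destruct (classic (forall z, z = x \/ z = y)) as [H|H].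
  { exists (dist X x y / 2). right; left. exists y. auto. }
  apply not_all_ex_not in H as [z Hz]. apply not_or_and in Hz as [Hzx Hzy].
  set (lower := fun b => forall y z : pt X, y <> x -> z <> x -> y <> z -> b <= gromov x y z).
  destruct (completeness lower) as [m [Hm1 Hm2]].
  - exists (gromov x y z). intros b Hb. apply Hb; auto.
  - exists 0. intros a b _ _ _. apply gromov_nonneg.
  - exists m. right; right. split; [|split].
    + exists y, z. auto.
    + intros a b Ha Hb Hab. apply Hm2. intros c Hc. apply Hc; auto.
    + intros b Hb. apply Hm1. exact Hb.
Qed.

Definition ud (x : pt X) : R := proj1_sig (constructive_indefinite_description _ (ud_is_exists x)).

Lemma ud_spec x : ud_is X x (ud x).
Proof. unfold ud. now destruct constructive_indefinite_description. Qed.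

Lemma ud_eq x r : ud_is X x r -> ud x = r.
Proof. apply ud_is_unique, ud_spec. Qed.

Lemma ud_nonneg x : 0 <= ud x.
Proof.
  destruct (ud_spec x) as [[_ ->]|[[y [_ [_ ->]]]|[_ [_ H]]]].
  - lra.
  - pose proof (dist_nonneg X x y). lra.
  - apply H. intros; apply gromov_nonneg.
Qed.

Lemma ud_le_gromov x y z : y <> x -> z <> x -> y <> z -> ud x <= gromov x y z.
Proof.
  intros Hy Hz Hyz. destruct (ud_spec x) as [[H _]|[[y0 [_ [H _]]]|[_ [H _]]]].
  - exfalso. apply Hy, H.
  - exfalso. destruct (H y); destruct (H z); congruence.
  - apply H; auto.
Qed.

Lemma ud_two_points x y : x <> y -> (forall z, z = x \/ z = y) -> ud x = dist X x y / 2.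
Proof. intros Hxy H. apply ud_eq. right; left. exists y. auto. Qed.

Lemma ud_add_le_dist x y : x <> y -> ud x + ud y <= dist X x y.
Proof.
  intros Hxy.
  destruct (classic (forall z, z = x \/ z = y)) as [H|H].
  - rewrite (ud_two_points x y), (ud_two_points y x), (dist_sym X y x); auto.
    + lra.
    + intros z. destruct (H z); auto.
  - apply not_all_ex_not in H as [w Hw]. apply not_or_and in Hw as [Hwx Hwy].
    pose proof (ud_le_gromov x y w (not_eq_sym Hxy) Hwx (not_eq_sym Hwy)).
    pose proof (ud_le_gromov y x w Hxy Hwy (not_eq_sym Hwx)).
    unfold gromov in *. rewrite (dist_sym X y x) in *. lra.
Qed.

Lemma finite_min_gap {A : Type} (l : list A) (P : A -> Prop) (v : A -> R) (r : R) :
  (forall a, P a -> r < v a) -> exists e, e > 0 /\ forall a, In a l -> P a -> r + e <= v a.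
Proof.
  intros H. induction l as [|a l [e [He IH]]].
  - exists 1. split; [lra | intros a []].
  - destruct (classic (P a)) as [Pa|nPa].
    + pose proof (H a Pa). exists (Rmin e (v a - r)). split; [apply Rmin_pos; lra|].
      pose proof (Rmin_r e (v a - r)). pose proof (Rmin_l e (v a - r)).
      intros b [<-|Hb] Pb; [lra|]. specialize (IH b Hb Pb). lra.
    + exists e. split; auto. intros b [<-|Hb] Pb; [contradiction | auto].
Qed.

Lemma ud_attained x : (exists y z, y <> x /\ z <> x /\ y <> z) ->
  exists y z, y <> x /\ z <> x /\ y <> z /\ ud x = gromov x y z.
Proof.
  intros [y0 [z0 [Hy0 [Hz0 Hyz0]]]]. apply NNPP. intros Hn.
  destruct (ud_spec x) as [[H _]|[[y [_ [H _]]]|[_ [H1 H1']]]].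
  - apply Hy0, H.
  - destruct (H y0); destruct (H z0); congruence.
  - destruct (pt_finite X) as [l Hl].
    destruct (finite_min_gap (list_prod l l)
      (fun p => fst p <> x /\ snd p <> x /\ fst p <> snd p)
      (fun p => gromov x (fst p) (snd p)) (ud x)) as [e [He Hall]].
    + intros [a b] [Ha [Hb Hab]]. simpl in *.
      destruct (Rle_lt_or_eq_dec _ _ (H1 a b Ha Hb Hab)); auto.
      exfalso. apply Hn. exists a, b. auto.
    + enough (ud x + e <= ud x) by lra.
      apply H1'. intros a b Ha Hb Hab.
      apply (Hall (a, b)); [apply in_prod; auto | simpl; auto].
Qed.

Lemma ud_is_zero_between a b c : b <> a -> c <> a -> b <> c ->
  dist X a b + dist X a c = dist X b c -> ud_is X a 0.
Proof.
  intros Hb Hc Hbc Heq. right; right. split; [|split].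
  - exists b, c. auto.
  - intros; apply gromov_nonneg.
  - intros b' Hb'. specialize (Hb' b c Hb Hc Hbc). unfold gromov in Hb'. lra.
Qed.

End Underline.

Lemma isometry_id (X : FinMetric) : is_isometry X X (fun x => x).
Proof. split; [split|]; eauto. Qed.

Lemma isometry_comp (X Y Z : FinMetric) f g :
  is_isometry X Y f -> is_isometry Y Z g -> is_isometry X Z (fun x => g (f x)).
Proof.
  intros [[fi fs] fd] [[gi gs] gd]. split; [split|].
  - intros x y H. apply fi, gi, H.
  - intros z. destruct (gs z) as [y <-]. destruct (fs y) as [x <-]. eauto.
  - intros x y. now rewrite gd, fd.
Qed.

Lemma isometry_of_surj (X Y : FinMetric) f : (forall y, exists x, f x = y) ->
  (forall x y, dist Y (f x) (f y) = dist X x y) -> is_isometry X Y f.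
Proof.
  intros fs fd. split; [split|]; auto.
  intros x y H. apply dist_zero. rewrite <- fd, H. apply dist_refl.
Qed.

Lemma isometric_refl X : isometric X X.
Proof. exists (fun x => x). apply isometry_id. Qed.

Lemma isometric_sym X Y : isometric X Y -> isometric Y X.
Proof.
  intros [f [[fi fs] fd]].
  set (g y := proj1_sig (constructive_indefinite_description _ (fs y))).
  assert (fg : forall y, f (g y) = y).
  { intros y. unfold g. now destruct constructive_indefinite_description. }
  exists g. apply isometry_of_surj.
  - intros x. exists (f x). apply fi. now rewrite fg.
  - intros a b. now rewrite <- fd, !fg.
Qed.

Lemma isometric_trans X Y Z : isometric X Y -> isometric Y Z -> isometric X Z.
Proof. intros [f Hf] [g Hg]. eexists. eapply isometry_comp; eauto. Qed.

Lemma ud_is_isometry (A B : FinMetric) (phi : pt A -> pt B) x r :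
  is_isometry A B phi -> ud_is B (phi x) r -> ud_is A x r.
Proof.
  intros [[pi ps] pd].
  assert (pn : forall a b, a <> b -> phi a <> phi b) by (intros a b H E; apply H, pi, E).
  intros [[H ->]|[[y0 [Hy0 [H1 ->]]]|[[y1 [z1 [Hy1 [Hz1 Hyz1]]]] [H1 H1']]]].
  - left. split; [intros y; apply pi, H | reflexivity].
  - destruct (ps y0) as [y <-]. right; left. exists y.
    split; [intros ->; auto|]. split; [|now rewrite pd].
    intros z. destruct (H1 (phi z)) as [E|E]; apply pi in E; auto.
  - destruct (ps y1) as [y <-]. destruct (ps z1) as [z <-].
    right; right. split; [|split].
    + exists y, z. repeat split; intros ->; auto.
    + intros a b Ha Hb Hab. rewrite <- !pd. apply H1; auto.
    + intros b' Hb'. apply H1'. intros c d Hc Hd Hcd.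
      destruct (ps c) as [a <-]. destruct (ps d) as [b <-]. rewrite !pd.
      apply Hb'; intros ->; auto.
Qed.

Lemma trim_isometric X Y : isometric X Y -> trim Y -> trim X.
Proof. intros [f Hf] HY x. eapply ud_is_isometry; [exact Hf | apply HY]. Qed.

(** * The drift of a finite metric space *)

Section DriftSpace.
Variable X : FinMetric.

Definition rho (x y : pt X) : R :=
  if classic_eq_dec x y then 0 else dist X x y - ud X x - ud X y.

Lemma rho_diag x : rho x x = 0.
Proof. unfold rho. now destruct (classic_eq_dec x x). Qed.

Lemma rho_neq x y : x <> y -> rho x y = dist X x y - ud X x - ud X y.
Proof. intros H. unfold rho. now destruct (classic_eq_dec x y). Qed.

Lemma rho_nonneg x y : 0 <= rho x y.
Proof.
  destruct (classic_eq_dec x y) as [->|H]; [rewrite rho_diag; lra|].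
  rewrite rho_neq by auto. pose proof (ud_add_le_dist X x y H). lra.
Qed.

Lemma rho_sym x y : rho x y = rho y x.
Proof.
  destruct (classic_eq_dec x y) as [->|H]; [reflexivity|].
  rewrite !rho_neq by auto. rewrite dist_sym. lra.
Qed.

Lemma rho_triangle x y z : rho x z <= rho x y + rho y z.
Proof.
  pose proof (rho_nonneg x y). pose proof (rho_nonneg y z).
  destruct (classic_eq_dec x z) as [->|Hxz]; [rewrite rho_diag; lra|].
  destruct (classic_eq_dec x y) as [->|Hxy]; [rewrite rho_diag; lra|].
  destruct (classic_eq_dec y z) as [->|Hyz]; [rewrite rho_diag; lra|].
  rewrite !rho_neq by auto.
  pose proof (ud_le_gromov X y x z Hxy (not_eq_sym Hyz) Hxz). unfold gromov in *.
  rewrite (dist_sym X y x) in *. lra.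
Qed.

Lemma rho_le_dist x y : rho x y <= dist X x y.
Proof.
  destruct (classic_eq_dec x y) as [->|H]; [rewrite rho_diag, dist_refl; lra|].
  rewrite rho_neq by auto. pose proof (ud_nonneg X x). pose proof (ud_nonneg X y). lra.
Qed.

Lemma rho_zero_l x y z : rho x y = 0 -> rho x z = rho y z.
Proof.
  intros H. pose proof (rho_triangle x y z). pose proof (rho_triangle y x z).
  pose proof H as H'. rewrite rho_sym in H'. lra.
Qed.

Definition rep (x : pt X) : pt X := epsilon (pt_nonempty X) (fun z => rho x z = 0).

Lemma rho_rep_r x : rho x (rep x) = 0.
Proof. apply (epsilon_spec (pt_nonempty X) (fun z => rho x z = 0)). exists x. apply rho_diag. Qed.

Lemma rep_eq x y : rho x y = 0 -> rep x = rep y.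
Proof.
  intros H. unfold rep. f_equal. apply functional_extensionality. intros z.
  apply propositional_extensionality. now rewrite (rho_zero_l x y z H).
Qed.

Lemma rep_idem x : rep (rep x) = rep x.
Proof. symmetry. apply rep_eq, rho_rep_r. Qed.

Lemma rho_rep x y : rho (rep x) (rep y) = rho x y.
Proof.
  rewrite <- (rho_zero_l x (rep x) (rep y) (rho_rep_r x)), rho_sym, (rho_sym x y).
  now rewrite <- (rho_zero_l y (rep y) x (rho_rep_r y)).
Qed.

Definition drift_pt := {x : pt X | rep x = x}.

Definition drift_proj (x : pt X) : drift_pt := exist _ (rep x) (rep_idem x).

Lemma drift_proj_val (a : drift_pt) : drift_proj (proj1_sig a) = a.
Proof. apply proj1_sig_inj, (proj2_sig a). Qed.

Lemma drift_proj_surj a : exists x, drift_proj x = a.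
Proof. exists (proj1_sig a). apply drift_proj_val. Qed.

Let drift_dist (a b : drift_pt) : R := rho (proj1_sig a) (proj1_sig b).

Lemma drift_pt_finite : exists l : list drift_pt, forall a, In a l.
Proof.
  destruct (pt_finite X) as [l Hl]. exists (map drift_proj l). intros a.
  rewrite <- (drift_proj_val a). apply in_map, Hl.
Qed.

Lemma drift_pt_nonempty : inhabited drift_pt.
Proof. destruct (pt_nonempty X) as [x]. exact (inhabits (drift_proj x)). Qed.

Lemma drift_dist_zero a b : drift_dist a b = 0 <-> a = b.
Proof.
  split; [|intros ->; apply rho_diag].
  intros H. apply proj1_sig_inj. destruct a as [a Ha], b as [b Hb]. simpl in *.
  rewrite <- Ha, <- Hb. now apply rep_eq.
Qed.

Definition drift_space : FinMetric :=
  {| pt := drift_pt; dist := drift_dist; pt_finite := drift_pt_finite;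
     pt_nonempty := drift_pt_nonempty; dist_zero := drift_dist_zero;
     dist_sym := fun a b => rho_sym _ _; dist_tri := fun a b c => rho_triangle _ _ _ |}.

Lemma drift_proj_drift : is_drift X drift_space drift_proj.
Proof.
  split; [exact drift_proj_surj|]. intros x y H.
  exists (ud X x), (ud X y). repeat split; try apply ud_spec.
  simpl. unfold drift_dist. simpl. rewrite rho_rep. now apply rho_neq.
Qed.

End DriftSpace.

Lemma dist_drift (X Y : FinMetric) f : is_drift X Y f ->
  forall x y, dist Y (f x) (f y) = rho X x y.
Proof.
  intros [_ Hd] x y. destruct (classic_eq_dec x y) as [->|H].
  - rewrite rho_diag. apply dist_refl.
  - destruct (Hd x y H) as [rx [ry [Hx [Hy ->]]]].
    now rewrite rho_neq, (ud_eq _ _ _ Hx), (ud_eq _ _ _ Hy).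
Qed.

Lemma drift_targets_isometric (X Y Z : FinMetric) f g :
  is_drift X Y f -> is_drift X Z g -> isometric Y Z.
Proof.
  intros Hf Hg. pose proof (dist_drift _ _ _ Hf) as Ef. pose proof (dist_drift _ _ _ Hg) as Eg.
  destruct Hf as [fs _], Hg as [gs _].
  set (s y := proj1_sig (constructive_indefinite_description _ (fs y))).
  assert (fs' : forall y, f (s y) = y).
  { intros y. unfold s. now destruct constructive_indefinite_description. }
  exists (fun y => g (s y)). apply isometry_of_surj.
  - intros z. destruct (gs z) as [x <-]. exists (f x).
    apply dist_zero. now rewrite Eg, <- Ef, fs', dist_refl.
  - intros a b. now rewrite Eg, <- Ef, !fs'.
Qed.

Lemma drift_isometric_drift_space X Y f : is_drift X Y f -> isometric (drift_space X) Y.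
Proof. intros; eapply drift_targets_isometric; [apply drift_proj_drift | eassumption]. Qed.

Lemma drift_of_trim_isometry X Y f : trim X -> is_drift X Y f -> is_isometry X Y f.
Proof.
  intros HX Hf. pose proof (dist_drift _ _ _ Hf) as E. destruct Hf as [fs _].
  apply isometry_of_surj; auto. intros x y. rewrite E.
  destruct (classic_eq_dec x y) as [->|H]; [now rewrite rho_diag, dist_refl|].
  rewrite rho_neq, (ud_eq _ _ _ (HX x)), (ud_eq _ _ _ (HX y)) by auto. lra.
Qed.

Lemma drift_comp_isometry X' X Y phi f : is_isometry X' X phi -> is_drift X Y f ->
  is_drift X' Y (fun x => f (phi x)).
Proof.
  intros Hp [fs fd]. pose proof Hp as [[pi ps] pd]. split.
  - intros y. destruct (fs y) as [x <-]. destruct (ps x) as [x' <-]. eauto.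
  - intros x y H. assert (Hphi : phi x <> phi y) by (intros E; apply pi in E; auto).
    destruct (fd _ _ Hphi) as [rx [ry [Hx [Hy ->]]]]. exists rx, ry.
    repeat split; try (eapply ud_is_isometry; eauto). now rewrite pd.
Qed.

Lemma drift_space_isometric X Y : isometric X Y -> isometric (drift_space X) (drift_space Y).
Proof.
  intros HXY. destruct (isometric_sym _ _ HXY) as [phi Hphi].
  apply isometric_sym, drift_isometric_drift_space with (f := fun y => drift_proj X (phi y)).
  eapply drift_comp_isometry; [exact Hphi | apply drift_proj_drift].
Qed.

(* When no two points are merged, every point lies between the two points realizing
   [ud], and these stay aligned after drifting. *)
Lemma drift_injective_trim X Y f : is_drift X Y f -> (forall x y, f x = f y -> x = y) -> trim Y.
Proof.
  intros Hf fi. pose proof (dist_drift _ _ _ Hf) as E. pose proof Hf as [fs _].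
  assert (fn : forall a b, a <> b -> f a <> f b) by (intros a b H Q; apply H, fi, Q).
  intros b. destruct (fs b) as [x <-].
  destruct (ud_spec X x) as [[H _]|[[y [Hy [H1 _]]]|[H3 _]]].
  - left. split; auto. intros c. destruct (fs c) as [z <-]. now rewrite (H z).
  - exfalso. apply (fn x y (not_eq_sym Hy)). apply dist_zero.
    rewrite E, rho_neq, (ud_two_points X x y), (ud_two_points X y x), (dist_sym X y x)
      by (auto; intros z; destruct (H1 z); auto). lra.
  - destruct (ud_attained X x H3) as [y [z [Hy [Hz [Hyz Eu]]]]].
    apply (ud_is_zero_between Y (f x) (f y) (f z)); auto.
    rewrite !E, !rho_neq by auto. unfold gromov in Eu. lra.
Qed.

Lemma drift_nonexpansive X Y f : is_drift X Y f -> forall x y, dist Y (f x) (f y) <= dist X x y.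
Proof. intros Hf x y. rewrite (dist_drift _ _ _ Hf). apply rho_le_dist. Qed.

(** * Surjective 1-Lipschitz maps *)

Definition lipschitz_onto (X Y : FinMetric) (g : pt X -> pt Y) : Prop :=
  (forall y, exists x, g x = y) /\ forall x y, dist Y (g x) (g y) <= dist X x y.

Lemma lipschitz_onto_id X : lipschitz_onto X X (fun x => x).
Proof. split; [eauto | intros; lra]. Qed.

Lemma lipschitz_onto_comp X Y Z f g :
  lipschitz_onto X Y f -> lipschitz_onto Y Z g -> lipschitz_onto X Z (fun x => g (f x)).
Proof.
  intros [fs fn] [gs gn]. split.
  - intros z. destruct (gs z) as [y <-]. destruct (fs y) as [x <-]. eauto.
  - intros x y. eapply Rle_trans; [apply gn | apply fn].
Qed.

Fixpoint sum_list {A : Type} (f : A -> R) (l : list A) : R :=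
  match l with nil => 0 | a :: l => f a + sum_list f l end.

Lemma sum_list_perm {A} (f : A -> R) l l' : Permutation l l' -> sum_list f l = sum_list f l'.
Proof. induction 1; simpl; lra. Qed.

Lemma sum_list_map {A B} (f : B -> R) (g : A -> B) l :
  sum_list f (map g l) = sum_list (fun x => f (g x)) l.
Proof. induction l; simpl; congruence. Qed.

Lemma sum_list_ext {A} (f g : A -> R) l : (forall x, In x l -> f x = g x) ->
  sum_list f l = sum_list g l.
Proof. induction l; simpl; intros H; auto. rewrite H, IHl; auto. Qed.

Lemma sum_list_le {A} (f g : A -> R) l : (forall x, In x l -> f x <= g x) ->
  sum_list f l <= sum_list g l.
Proof.
  induction l as [|a l IH]; simpl; intros H; [lra|].
  pose proof (H a (or_introl eq_refl)). pose proof (IH (fun x Hx => H x (or_intror Hx))). lra.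
Qed.

Lemma sum_list_le_eq {A} (f g : A -> R) l : (forall x, In x l -> f x <= g x) ->
  sum_list f l = sum_list g l -> forall x, In x l -> f x = g x.
Proof.
  induction l as [|a l IH]; simpl; intros H E x Hx; [contradiction|].
  pose proof (H a (or_introl eq_refl)).
  pose proof (sum_list_le f g l (fun x Hx => H x (or_intror Hx))).
  destruct Hx as [<-|Hx]; [lra|]. apply IH; auto. lra.
Qed.

(* A surjection permutes the points, so the sum of all distances is unchanged; as no
   distance increases, none decreases. *)
Lemma lipschitz_onto_self_isometry X g : lipschitz_onto X X g -> is_isometry X X g.
Proof.
  intros [gs gn]. apply isometry_of_surj; auto.
  destruct (enum_nodup X) as [l [Nl Hl]].
  assert (P : Permutation l (map g l)).
  { apply NoDup_Permutation_bis; auto.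
    - now rewrite length_map.
    - intros y _. destruct (gs y) as [x <-]. apply in_map, Hl. }
  set (row (x : pt X) := sum_list (fun y => dist X x y) l).
  assert (Sum : sum_list (fun x => sum_list (fun y => dist X (g x) (g y)) l) l =
                sum_list row l).
  { rewrite (sum_list_perm row _ _ P), sum_list_map.
    apply sum_list_ext. intros x _. unfold row.
    now rewrite (sum_list_perm (fun y => dist X (g x) y) _ _ P), sum_list_map. }
  intros x y.
  assert (Ex := sum_list_le_eq _ _ l (fun x _ => sum_list_le _ _ l (fun y _ => gn x y))
                 Sum x (Hl x)).
  exact (sum_list_le_eq _ _ l (fun y _ => gn x y) Ex y (Hl y)).
Qed.

Section EvolutionClosure.
Variables (V : Type) (E : V -> V -> Type) (rel : V -> V -> Prop).
Hypotheses (rel_refl : forall A, rel A A)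
           (rel_trans : forall A B C, rel A B -> rel B C -> rel A C)
           (rel_edge : forall A B, E A B -> rel A B).

Lemma evolution_closure (b : evolution V E) i :
  (i <= ev_len V E b)%nat -> rel (terminal b) (ev_vx V E b i).
Proof.
  intros Hi. remember (ev_len V E b - i)%nat as k eqn:Hk. revert i Hi Hk.
  induction k as [|k IH]; intros i Hi Hk.
  - replace i with (ev_len V E b) by lia. apply rel_refl.
  - apply rel_trans with (ev_vx V E b (S i)); [apply IH; lia|].
    apply rel_edge, (ev_edge V E b i). lia.
Qed.

Lemma ancestor_closure A B : ancestor E A B -> rel B A.
Proof. intros [b [<- <-]]. apply evolution_closure. lia. Qed.

End EvolutionClosure.

Definition edge_evolution (V : Type) (E : V -> V -> Type) (A B : V) (e : E B A) : evolution V E :=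
  Build_evolution V E 1 (fun k => match k with 0 => A | _ => B end)
    (fun k => match k as k0 return (k0 < 1)%nat ->
               E (match S k0 with 0 => A | _ => B end) (match k0 with 0 => A | _ => B end) with
              | 0 => fun _ => e
              | S k' => fun H => False_rect _ (Nat.nlt_0_r k' (proj2 (Nat.succ_lt_mono k' 0) H))
              end).

Lemma ancestor_of_edge (V : Type) (E : V -> V -> Type) (A B : V) : E B A -> ancestor E A B.
Proof. intros e. now exists (edge_evolution V E A B e). Qed.

Lemma MEdge_lipschitz_onto A B (e : MEdge A B) : lipschitz_onto A B (proj1_sig e).
Proof.
  destruct e as [f [[[fi fs] fd]|Hd]]; simpl.
  - split; auto. intros; rewrite fd; lra.
  - split; [apply Hd | apply drift_nonexpansive, Hd].
Qed.

Lemma ancestor_lipschitz_onto A B : ancestor MEdge A B -> exists g, lipschitz_onto B A g.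
Proof.
  apply (ancestor_closure _ _ (fun X Y => exists g, lipschitz_onto X Y g)).
  - intros X. exists (fun x => x). apply lipschitz_onto_id.
  - intros X Y Z [f Hf] [g Hg]. eexists. eapply lipschitz_onto_comp; eauto.
  - intros X Y e. exact (ex_intro _ _ (MEdge_lipschitz_onto X Y e)).
Qed.

Lemma isometric_MEdge A B : isometric A B -> inhabited (MEdge A B).
Proof. intros [f Hf]. constructor. exists f. now left. Qed.

Lemma isotypic_iff_isometric X Y : isotypic MEdge X Y <-> isometric X Y.
Proof.
  split.
  - intros [HXY HYX].
    destruct (ancestor_lipschitz_onto _ _ HXY) as [h Hh].
    destruct (ancestor_lipschitz_onto _ _ HYX) as [k Hk].
    assert (Hhk : is_isometry X X (fun x => h (k x))).
    { apply lipschitz_onto_self_isometry. eapply lipschitz_onto_comp; eauto. }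
    destruct Hk as [ks kn], Hh as [_ hn], Hhk as [_ Hhk].
    exists k. apply isometry_of_surj; auto. intros x y. apply Rle_antisym; auto.
    rewrite <- (Hhk x y). apply hn.
  - intros H. split.
    + destruct (isometric_MEdge _ _ (isometric_sym _ _ H)) as [e]. now apply ancestor_of_edge.
    + destruct (isometric_MEdge _ _ H) as [e]. now apply ancestor_of_edge.
Qed.

(** * Height *)

Inductive drift_height : FinMetric -> nat -> Prop :=
| drift_height_trim X : trim X -> drift_height X 0
| drift_height_step X n : ~ trim X -> drift_height (drift_space X) n -> drift_height X (S n).

Lemma drift_height_isometric X n :
  drift_height X n -> forall X', isometric X' X -> drift_height X' n.
Proof.
  induction 1 as [X HX|X n HX _ IH]; intros X' HX'.
  - apply drift_height_trim. eapply trim_isometric; eauto.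
  - apply drift_height_step.
    + intros T. apply HX. eapply trim_isometric; [apply isometric_sym, HX' | exact T].
    + apply IH, drift_space_isometric, HX'.
Qed.

Lemma drift_height_unique X n m : drift_height X n -> drift_height X m -> n = m.
Proof.
  intros Hn. revert m. induction Hn as [X HX|X n HX _ IH]; intros m Hm;
    inversion Hm; subst; try contradiction; auto.
Qed.

(* Drifting either merges two points or, if it is injective, already produces a trim space. *)
Lemma drift_height_exists_bounded k : forall X (l : list (pt X)),
  (length l <= k)%nat -> (forall x, In x l) -> exists n, drift_height X n.
Proof.
  induction k as [|k IH]; intros X l Hlen Hl.
  { destruct (pt_nonempty X) as [x]. destruct l; [destruct (Hl x) | simpl in Hlen; lia]. }
  destruct (classic (trim X)) as [T|NT]; [exists 0%nat; now apply drift_height_trim|].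
  destruct (classic (forall x y, drift_proj X x = drift_proj X y -> x = y)) as [Inj|NInj].
  - exists 1%nat. apply drift_height_step, drift_height_trim; auto.
    eapply drift_injective_trim; [apply drift_proj_drift | exact Inj].
  - apply not_all_ex_not in NInj as [x NInj]. apply not_all_ex_not in NInj as [y NInj].
    apply imply_to_and in NInj as [Exy Nxy].
    destruct (IH (drift_space X) (map (drift_proj X) (remove classic_eq_dec x l))) as [n Hn].
    + rewrite length_map. pose proof (remove_length_lt classic_eq_dec l x (Hl x)). lia.
    + intros b. destruct (drift_proj_surj X b) as [z <-].
      destruct (classic_eq_dec z x) as [->|Hzx]; [rewrite Exy|];
        apply in_map, in_in_remove; auto.
    + exists (S n). now apply drift_height_step.
Qed.

Lemma drift_height_exists X : exists n, drift_height X n.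
Proof. destruct (pt_finite X) as [l Hl]. eapply drift_height_exists_bounded; eauto. Qed.

Definition hgt (X : FinMetric) : nat :=
  proj1_sig (constructive_indefinite_description _ (drift_height_exists X)).

Lemma hgt_spec X : drift_height X (hgt X).
Proof. unfold hgt. now destruct constructive_indefinite_description. Qed.

Lemma hgt_eq X n : drift_height X n -> hgt X = n.
Proof. apply drift_height_unique, hgt_spec. Qed.

Lemma hgt_isometric X Y : isometric X Y -> hgt X = hgt Y.
Proof. intros H. apply hgt_eq. eapply drift_height_isometric; [apply hgt_spec | exact H]. Qed.

Lemma trim_iff_hgt0 X : trim X <-> hgt X = 0%nat.
Proof.
  split; [intros T; now apply hgt_eq, drift_height_trim|].
  intros E. pose proof (hgt_spec X) as H. rewrite E in H. now inversion H.
Qed.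

Lemma hgt_drift_space X : ~ trim X -> hgt X = S (hgt (drift_space X)).
Proof.
  intros NT. pose proof (hgt_spec X) as H. inversion H; [contradiction|].
  f_equal. symmetry. now apply hgt_eq.
Qed.

Lemma MEdge_cases A B (e : MEdge A B) :
  isometric A B \/ (isometric (drift_space A) B /\ hgt A = S (hgt B)).
Proof.
  destruct e as [f [Hi|Hd]]; [left; now exists f|].
  destruct (classic (trim A)) as [T|NT]; [left; exists f; now apply drift_of_trim_isometry|].
  right. pose proof (drift_isometric_drift_space _ _ _ Hd) as HD.
  split; auto. rewrite <- (hgt_isometric _ _ HD). now apply hgt_drift_space.
Qed.

Lemma MEdge_hgt A B : MEdge A B -> (hgt B <= hgt A <= S (hgt B))%nat.
Proof.
  intros e. destruct (MEdge_cases _ _ e) as [HAB|[_ E]]; [rewrite (hgt_isometric _ _ HAB)|]; lia.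
Qed.

Fixpoint iter_drift (X : FinMetric) (j : nat) : FinMetric :=
  match j with 0 => X | S j => drift_space (iter_drift X j) end.

Lemma iter_drift_add X i j : iter_drift (iter_drift X i) j = iter_drift X (j + i).
Proof. induction j; simpl; congruence. Qed.

Lemma iter_drift_isometric X Y j : isometric X Y -> isometric (iter_drift X j) (iter_drift Y j).
Proof. intros H. induction j; simpl; auto using drift_space_isometric. Qed.

Lemma hgt_iter_drift X j : (j <= hgt X)%nat -> hgt (iter_drift X j) = (hgt X - j)%nat.
Proof.
  induction j as [|j IH]; intros Hj; simpl; [lia|].
  rewrite (hgt_drift_space (iter_drift X j)) in IH by (rewrite trim_iff_hgt0, IH; lia). lia.
Qed.

Definition descends (A B : FinMetric) : Prop :=
  (hgt B <= hgt A)%nat /\ isometric B (iter_drift A (hgt A - hgt B)).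

Lemma descends_refl A : descends A A.
Proof. split; [lia|]. rewrite Nat.sub_diag. apply isometric_refl. Qed.

Lemma descends_trans A B C : descends A B -> descends B C -> descends A C.
Proof.
  intros [HAB IAB] [HBC IBC]. split; [lia|].
  eapply isometric_trans; [exact IBC|].
  eapply isometric_trans; [apply iter_drift_isometric, IAB|].
  rewrite iter_drift_add. replace (hgt B - hgt C + (hgt A - hgt B))%nat with (hgt A - hgt C)%nat
    by lia. apply isometric_refl.
Qed.

Lemma MEdge_descends A B : MEdge A B -> descends A B.
Proof.
  intros e. unfold descends. destruct (MEdge_cases _ _ e) as [HAB|[HD E]].
  - rewrite (hgt_isometric _ _ HAB), Nat.sub_diag. split; [lia|]. now apply isometric_sym.
  - rewrite E, Nat.sub_succ_l, Nat.sub_diag by lia. split; [lia|]. now apply isometric_sym.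
Qed.

Lemma ancestor_descends A B : ancestor MEdge A B -> descends B A.
Proof.
  apply ancestor_closure; [exact descends_refl | exact descends_trans | exact MEdge_descends].
Qed.

Lemma primitive_iff_trim X : primitive_vertex MEdge X <-> trim X.
Proof.
  split.
  - intros P x. pose proof (drift_proj_drift X) as Hp.
    assert (Anc : ancestor MEdge (drift_space X) X).
    { apply ancestor_of_edge. exists (drift_proj X). now right. }
    destruct (proj1 (isotypic_iff_isometric _ _) (P _ Anc)) as [k [[_ ks] kd]].
    assert (Hk : is_isometry X X (fun x => k (drift_proj X x))).
    { apply lipschitz_onto_self_isometry. eapply lipschitz_onto_comp.
      - split; [apply drift_proj_surj | apply drift_nonexpansive, Hp].
      - split; [exact ks | intros; rewrite kd; lra]. }
    destruct (classic (forall y, y = x)) as [All|NAll]; [left; auto|].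
    apply not_all_ex_not in NAll as [y Hy].
    destruct Hk as [_ Hk]. specialize (Hk x y).
    rewrite kd, (dist_drift _ _ _ Hp), rho_neq in Hk by auto.
    pose proof (ud_nonneg X x). pose proof (ud_nonneg X y).
    replace 0 with (ud X x) by lra. apply ud_spec.
  - intros T B HB. apply isotypic_iff_isometric.
    destruct (ancestor_descends _ _ HB) as [_ HI].
    rewrite (proj1 (trim_iff_hgt0 X) T) in HI. exact HI.
Qed.

(** * The universal evolution *)

Definition canonical_edge X n k (Hk : (k < n)%nat) :
  MEdge (iter_drift X (n - S k)) (iter_drift X (n - k)).
Proof.
  replace (n - k)%nat with (S (n - S k)) by lia.
  exact (exist _ (drift_proj _) (or_intror (drift_proj_drift _))).
Defined.

Definition canonical_evolution X : evolution FinMetric MEdge :=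
  Build_evolution FinMetric MEdge (hgt X) (fun k => iter_drift X (hgt X - k))
    (canonical_edge X (hgt X)).

Lemma canonical_evolution_full X : full_evolution FinMetric MEdge (canonical_evolution X) X.
Proof.
  split.
  - apply primitive_iff_trim, trim_iff_hgt0. simpl. rewrite hgt_iter_drift; lia.
  - unfold terminal. simpl. now rewrite Nat.sub_diag.
Qed.

Section UnitSteps.
Variable h : nat -> nat.
Hypothesis h0 : h 0 = 0%nat.

Lemma unit_steps_le m : (forall i, (i < m)%nat -> (h (S i) <= S (h i))%nat) -> (h m <= m)%nat.
Proof.
  induction m as [|m IH]; intros Hs; [lia|].
  pose proof (Hs m (Nat.lt_succ_diag_r m)). enough (h m <= m)%nat by lia.
  apply IH. intros i Hi. apply Hs. lia.
Qed.

(* [r k] is the first index at which level [k] is reached. *)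
Lemma unit_steps_hit_levels m : (forall i, (i < m)%nat -> (h (S i) <= S (h i))%nat) ->
  exists r : nat -> nat, (forall k, (k < h m)%nat -> (r k < r (S k))%nat) /\
    (forall k, (k <= h m)%nat -> (r k <= m)%nat /\ h (r k) = k).
Proof.
  induction m as [|m IH]; intros Hs.
  { exists (fun _ => 0%nat). rewrite h0. split; intros k Hk; lia. }
  destruct IH as [r [Hinc Hhit]]; [intros i Hi; apply Hs; lia|].
  pose proof (Hs m (Nat.lt_succ_diag_r m)) as Hm.
  destruct (Nat.le_gt_cases (h (S m)) (h m)) as [Hle|Hgt].
  - exists r. split; intros k Hk; [apply Hinc; lia|].
    destruct (Hhit k ltac:(lia)). split; [lia | auto].
  - exists (fun k => if (k <=? h m)%nat then r k else S m).
    split; intros k Hk.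
    + destruct (Nat.leb_spec k (h m)), (Nat.leb_spec (S k) (h m)); try lia.
      * apply Hinc. lia.
      * destruct (Hhit k ltac:(lia)). lia.
    + destruct (Nat.leb_spec k (h m)); [destruct (Hhit k ltac:(lia)); split; [lia | auto]|].
      split; lia.
Qed.

End UnitSteps.

Lemma full_evolution_hgt0 b X : full_evolution FinMetric MEdge b X ->
  hgt (ev_vx FinMetric MEdge b 0) = 0%nat.
Proof. intros [P _]. now apply trim_iff_hgt0, primitive_iff_trim. Qed.

Lemma evolution_hgt_step (b : evolution FinMetric MEdge) i : (i < ev_len _ _ b)%nat ->
  (hgt (ev_vx _ _ b (S i)) <= S (hgt (ev_vx _ _ b i)))%nat.
Proof. intros Hi. pose proof (MEdge_hgt _ _ (ev_edge _ _ b i Hi)). lia. Qed.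

Lemma hgt_le_full_length b X : full_evolution FinMetric MEdge b X -> (hgt X <= ev_len _ _ b)%nat.
Proof.
  intros Hb. pose proof Hb as [_ <-].
  apply (unit_steps_le (fun i => hgt (ev_vx _ _ b i))).
  - exact (full_evolution_hgt0 b _ Hb).
  - apply evolution_hgt_step.
Qed.

Lemma has_height_hgt X : has_height FinMetric MEdge X (Some (hgt X)).
Proof.
  split; [exists (canonical_evolution X); split; auto using canonical_evolution_full|].
  intros a Ha. exact (hgt_le_full_length a X Ha).
Qed.

Lemma has_height_eq X o : has_height FinMetric MEdge X o -> o = Some (hgt X).
Proof.
  destruct o as [n|]; simpl.
  - intros [[a [Ha <-]] Hmin]. f_equal. apply Nat.le_antisymm.
    + exact (Hmin _ (canonical_evolution_full X)).
    + exact (hgt_le_full_length a X Ha).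
  - intros H. exfalso. apply H. exists (canonical_evolution X). apply canonical_evolution_full.
Qed.

Lemma canonical_evolution_universal X :
  universal_evolution FinMetric MEdge (canonical_evolution X) X.
Proof.
  split; [apply canonical_evolution_full|]. intros b Hb.
  set (h i := hgt (ev_vx _ _ b i)).
  assert (Hm : h (ev_len _ _ b) = hgt X) by (destruct Hb as [_ <-]; reflexivity).
  destruct (unit_steps_hit_levels h (full_evolution_hgt0 b X Hb) (ev_len _ _ b)
              (evolution_hgt_step b)) as [r [Hinc Hhit]].
  rewrite Hm in Hinc, Hhit.
  split; [exact (hgt_le_full_length b X Hb)|]. exists r. simpl. split; [|split].
  - exact Hinc.
  - apply Hhit. lia.
  - intros k Hk. destruct (Hhit k Hk) as [Hr Hh]. apply isotypic_iff_isometric.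
    destruct (evolution_closure _ _ descends descends_refl descends_trans MEdge_descends b (r k) Hr)
      as [_ HI].
    destruct Hb as [_ Ht]. rewrite Ht in HI. fold (h (r k)) in HI. rewrite Hh in HI.
    now apply isometric_sym.
Qed.

(** * Smallness *)

Definition metric_on (n : nat) (d : nat -> nat -> R) : Prop :=
  (0 < n)%nat /\
  (forall i j, (i < n)%nat -> (j < n)%nat -> (d i j = 0 <-> i = j)) /\
  (forall i j, (i < n)%nat -> (j < n)%nat -> d i j = d j i) /\
  (forall i j k, (i < n)%nat -> (j < n)%nat -> (k < n)%nat -> d i k <= d i j + d j k).

Section InitialSegment.
Variables (n : nat) (d : nat -> nat -> R) (Hd : metric_on n d).

Definition segment_pt := {i : nat | (i < n)%nat}.

Let segment_dist (a b : segment_pt) := d (proj1_sig a) (proj1_sig b).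

Lemma segment_finite : exists l : list segment_pt, forall x, In x l.
Proof.
  set (clamp := fun i : nat =>
    match excluded_middle_informative (i < n)%nat return segment_pt with
    | left h => exist _ i h
    | right _ => exist _ 0%nat (proj1 Hd) end).
  exists (map clamp (seq 0 n)). intros [i hi].
  replace (exist _ i hi) with (clamp i).
  - apply in_map, in_seq. lia.
  - apply proj1_sig_inj. unfold clamp. now destruct excluded_middle_informative.
Qed.

Lemma segment_dist_zero a b : segment_dist a b = 0 <-> a = b.
Proof.
  destruct Hd as [_ [Hz _]]. destruct a as [i hi], b as [j hj]. unfold segment_dist; simpl.
  rewrite Hz by auto. split.
  - intros ->. now apply proj1_sig_inj.
  - intros E. now injection E.
Qed.

Definition segment_space : FinMetric :=
  {| pt := segment_pt; dist := segment_dist; pt_finite := segment_finite;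
     pt_nonempty := inhabits (exist _ 0%nat (proj1 Hd)); dist_zero := segment_dist_zero;
     dist_sym := fun a b => proj1 (proj2 (proj2 Hd)) _ _ (proj2_sig a) (proj2_sig b);
     dist_tri := fun a b c =>
       proj2 (proj2 (proj2 Hd)) _ _ _ (proj2_sig a) (proj2_sig b) (proj2_sig c) |}.

End InitialSegment.

Definition point_space : FinMetric.
Proof.
  refine {| pt := unit; dist := fun _ _ => 0 |}.
  - exists (tt :: nil). intros []. now left.
  - exact (inhabits tt).
  - intros [] []. tauto.
  - reflexivity.
  - intros; lra.
Defined.

Definition decode_space (c : {n : nat & nat -> nat -> R}) : FinMetric :=
  match excluded_middle_informative (metric_on (projT1 c) (projT2 c)) with
  | left H => segment_space _ _ H
  | right _ => point_space end.

Lemma MEdge_small : small FinMetric MEdge.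
Proof.
  exists {n : nat & nat -> nat -> R}, decode_space. intros X.
  destruct (pt_nonempty X) as [x0]. destruct (enum_nodup X) as [l [Nl Hl]].
  set (d i j := dist X (nth i l x0) (nth j l x0)).
  assert (Hd : metric_on (length l) d).
  { split; [|split; [|split]].
    - destruct l; [destruct (Hl x0) | simpl; lia].
    - intros i j Hi Hj. unfold d. rewrite dist_zero. split; [|intros ->; auto].
      intros E. now apply (proj1 (NoDup_nth l x0) Nl).
    - intros; apply dist_sym.
    - intros; apply dist_tri. }
  exists (existT _ (length l) d). apply isotypic_iff_isometric. unfold decode_space. simpl.
  destruct excluded_middle_informative as [H|H]; [|contradiction].
  exists (fun a : segment_pt _ => nth (proj1_sig a) l x0). apply isometry_of_surj.
  - intros y. destruct (In_nth l y x0 (Hl y)) as [k [Hk E]]. now exists (exist _ k Hk).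
  - reflexivity.
Qed.

Theorem mainTheorem2 :
  (forall X Y : FinMetric, isotypic MEdge X Y <-> isometric X Y) /\
  (forall X : FinMetric, primitive_vertex MEdge X <-> trim X) /\
  phylogenetic_quiver MEdge /\
  (forall X : FinMetric, regular MEdge X).
Proof.
  split; [exact isotypic_iff_isometric|]. split; [exact primitive_iff_trim|].
  split.
  - split; [exact MEdge_small|]. split.
    + intros A B e oA oB HA HB. rewrite (has_height_eq _ _ HA), (has_height_eq _ _ HB).
      simpl. pose proof (MEdge_hgt _ _ e). lia.
    + intros X. exists (canonical_evolution X). apply canonical_evolution_universal.
  - intros X B HB Hh. injection (has_height_eq _ _ (Hh _ (has_height_hgt X))) as E.
    destruct (ancestor_descends _ _ HB) as [_ HI]. rewrite E, Nat.sub_diag in HI.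
    now apply isometric_MEdge, isometric_sym.
Qed.
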